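(* Let $A\in\mathbb Z^{d\times n}$ satisfy $\ker(A)\cap\mathbb N^n=\{0\}$ (not necessarily homogeneous). Then the Graver basis $G(A)$ is strongly distance reducing.
   Context: For $z\in\mathbb Z^n$, $z^\pm\in\mathbb N^n$ are the unique vectors with disjoint supports and $z=z^+-z^-$; $\|\cdot\|$ is the $1$-norm. A conformal decomposition of $z\in\ker(A)$ is $z=u+v$ with $u,v\in\ker(A)$, $z^+=u^++v^+$, $z^-=u^-+v^-$; it is proper if $u,v\ne0$. The Graver basis $G(A)$ is the set of nonzero $z\in\ker(A)$ with no proper conformal decomposition. A set $B\subseteq\ker(A)$ is strongly distance reducing if for every nonzero $z\in\ker(A)$ there exist $u\in B$ and $\varepsilon\in\{\pm1\}$ with $z^++\varepsilon u\in\mathbb N^n$ and $\|z^++\varepsilon u-z^-\|<\|z\|$, and there exist $u'\in B$ and $\varepsilon'\in\{\pm1\}$ with $z^-+\varepsilon'u'\in\mathbb N^n$ and $\|z^+-(z^-+\varepsilon'u')\|<\|z\|$. *)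

From mathcomp Require Import all_boot all_order all_algebra.
Set Implicit Arguments. Unset Strict Implicit. Unset Printing Implicit Defensive.
Import Order.TTheory GRing.Theory Num.Theory.
Local Open Scope ring_scope.

Definition vpos n (z : 'cV[int]_n) : 'cV[int]_n := \col_i Num.max (z i 0) 0.
Definition vneg n (z : 'cV[int]_n) : 'cV[int]_n := \col_i Num.max (- z i 0) 0.
Definition norm1 n (z : 'cV[int]_n) : int := \sum_i `|z i 0|.
Definition nonneg_vec n (z : 'cV[int]_n) : Prop := forall i, 0 <= z i 0.
Definition in_ker d n (A : 'M[int]_(d, n)) (z : 'cV[int]_n) : Prop := A *m z = 0.

Definition conformal_decomp d n (A : 'M[int]_(d, n)) (z u v : 'cV[int]_n) : Prop :=
  [/\ in_ker A u, in_ker A v, z = u + v,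
      vpos z = vpos u + vpos v & vneg z = vneg u + vneg v].

Definition graver d n (A : 'M[int]_(d, n)) (z : 'cV[int]_n) : Prop :=
  [/\ in_ker A z, z <> 0 &
      ~ (exists u v, conformal_decomp A z u v /\ u <> 0 /\ v <> 0)].

Definition strongly_distance_reducing d n (A : 'M[int]_(d, n))
    (B : 'cV[int]_n -> Prop) : Prop :=
  (forall u, B u -> in_ker A u) /\
  (forall z, in_ker A z -> z <> 0 ->
    (exists u (eps : int), [/\ B u, eps = 1 \/ eps = -1,
        nonneg_vec (vpos z + eps *: u) &
        norm1 (vpos z + eps *: u - vneg z) < norm1 z]) /\
    (exists u' (eps' : int), [/\ B u', eps' = 1 \/ eps' = -1,
        nonneg_vec (vneg z + eps' *: u') &
        norm1 (vpos z - (vneg z + eps' *: u')) < norm1 z])).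

(* Every nonzero z in ker(A) lies conformally above some Graver element g:
   descend along proper conformal decompositions, each of which strictly
   lowers the 1-norm.  As g is sign-compatible with z and |g_i| <= |z_i|, both
   z^+ - g and z^- + g stay nonnegative, and either move replaces the
   difference z^+ - z^- = z by z - g, whose 1-norm is ||z|| - ||g|| < ||z||. *)
From mathcomp Require Import all_boot all_order all_algebra.
From mathcomp Require Import zify.
From Stdlib Require Import Classical.
Set Implicit Arguments. Unset Strict Implicit.
Import Order.TTheory GRing.Theory Num.Theory.
Local Open Scope ring_scope.

Definition conformal_le n (g z : 'cV[int]_n) : Prop :=
  forall i, (0 <= g i 0 <= z i 0) \/ (z i 0 <= g i 0 <= 0).

Section ConformalOrder.

Variable n : nat.
Implicit Types g u z : 'cV[int]_n.

Lemma conformal_le_refl z : conformal_le z z.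
Proof. by move=> i; lia. Qed.

Lemma conformal_le_trans u g z :
  conformal_le g u -> conformal_le u z -> conformal_le g z.
Proof. by move=> gu uz i; have := gu i; have := uz i; lia. Qed.

Lemma vpos_sub_vneg z : vpos z - vneg z = z.
Proof. apply/matrixP => i j; rewrite ord1 !mxE; move: (z i 0) => a; lia. Qed.

Lemma norm1_ge0 z : 0 <= norm1 z.
Proof. exact: sumr_ge0. Qed.

Lemma norm1_gt0 z : z <> 0 -> 0 < norm1 z.
Proof.
move=> nz; rewrite lt_def norm1_ge0 andbT; apply/eqP => z0; apply: nz.
apply/matrixP => i j; rewrite ord1 mxE.
apply/eqP/normr0P; exact: psumr_eq0P (fun i _ => normr_ge0 (z i 0)) z0 i isT.
Qed.

Lemma norm1_conformal_sub g z :
  conformal_le g z -> norm1 z = norm1 g + norm1 (z - g).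
Proof.
move=> gz; rewrite /norm1 -big_split /=; apply: eq_bigr => i _.
by rewrite !mxE; move: (g i 0) (z i 0) (gz i) => a b; lia.
Qed.

Lemma nonneg_vpos_sub g z : conformal_le g z -> nonneg_vec (vpos z - g).
Proof. by move=> gz i; rewrite !mxE; move: (g i 0) (z i 0) (gz i) => a b; lia. Qed.

Lemma nonneg_vneg_add g z : conformal_le g z -> nonneg_vec (vneg z + g).
Proof. by move=> gz i; rewrite !mxE; move: (g i 0) (z i 0) (gz i) => a b; lia. Qed.

End ConformalOrder.

Lemma conformal_decomp_le d n (A : 'M[int]_(d, n)) (z u v : 'cV[int]_n) :
  conformal_decomp A z u v -> conformal_le u z.
Proof.
case=> _ _ -> /matrixP Epos /matrixP Eneg i.
by have := Epos i 0; have := Eneg i 0; rewrite !mxE; lia.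
Qed.

Lemma graver_conformal_le d n (A : 'M[int]_(d, n)) (z : 'cV[int]_n) :
  in_ker A z -> z <> 0 -> exists2 g, graver A g & conformal_le g z.
Proof.
have [k] : exists k : nat, norm1 z <= k%:Z by exists `|norm1 z|%N; rewrite abszE ler_norm.
elim: k z => [|k IHk] z zk kz nz; first by have := norm1_gt0 nz; lia.
case: (classic (exists u v, conformal_decomp A z u v /\ u <> 0 /\ v <> 0));
  last by exists z => //; apply: conformal_le_refl.
move=> [u [v [zuv [nu nv]]]].
have uz := conformal_decomp_le zuv.
have Ev : v = z - u by case: zuv => _ _ -> _ _; rewrite addrAC subrr add0r.
have u_lt_z : norm1 u < norm1 z.
  by rewrite (norm1_conformal_sub uz) -Ev ltrDl norm1_gt0.
have [ku _ _ _ _] := zuv.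
have [g gg gu] := IHk u ltac:(lia) ku nu.
by exists g => //; apply: conformal_le_trans gu uz.
Qed.

Theorem proposition7p2 (d n : nat) (A : 'M[int]_(d, n))
  (hA : forall z : 'cV[int]_n, in_ker A z -> nonneg_vec z -> z = 0) :
  strongly_distance_reducing A (graver A).
Proof.
split => [u [] // | z kz nz].
have [g gg gz] := graver_conformal_le kz nz.
have g_gt0 : 0 < norm1 g by apply: norm1_gt0; case: gg.
have reduce : norm1 (z - g) < norm1 z.
  by rewrite [ltRHS](norm1_conformal_sub gz) ltrDr.
split.
- exists g, (-1); rewrite scaleN1r; split => //; first by right.
    exact: nonneg_vpos_sub.
  by rewrite addrAC vpos_sub_vneg.
- exists g, 1; rewrite scale1r; split => //; first by left.
    exact: nonneg_vneg_add.
  by rewrite opprD addrA vpos_sub_vneg.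
Qed.
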